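(* Let $\Gamma=\bigcup_i\gamma_i$ be an admissible finite collection of transverse unobstructed curves in $\Sigma$ and let $u\in C_2^+(\Sigma;\mathbb{R})$. Then $(u+H_{\mathbb{R}})\cap C_2^+(\Sigma;\mathbb{R})$ is compact.
   Context: $\Sigma$ is a closed oriented surface of genus at least two; unobstructed curves are oriented immersed closed curves whose lifts to the universal cover are properly embedded lines. $C=C_2(\Sigma;\mathbb{Z})$ is the free $\mathbb{Z}$-module with basis the connected components of $\Sigma\setminus\Gamma$, $C_2(\Sigma;\mathbb{R})=C\otimes\mathbb{R}$, and $C_2^+(\Sigma;\mathbb{R})$ is the cone of elements with all coordinates nonnegative. The Euler measure $e(S)$ of a surface with corners is $\frac{1}{2\pi}$ times the integral of the curvature of a metric for which the boundary is geodesic and corners are right angles; it extends to a linear form $e$ on $C$. $H\subset C$ is the subgroup of $2$-chains in $\ker e$ whose boundary is a linear combination of the $\gamma_i$, and $H_{\mathbb{R}}$ is its $\mathbb{R}$-span. $\Gamma$ is admissible iff every nonzero $b\in H$ has both positive and negative coordinates. *)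

From HB Require Import structures.
From mathcomp Require Import all_boot all_order all_algebra.
From mathcomp Require Import all_classical all_reals all_analysis.
Set Implicit Arguments. Unset Strict Implicit. Unset Printing Implicit Defensive.
Import Order.TTheory GRing.Theory Num.Theory.
Local Open Scope ring_scope.
Local Open Scope classical_set_scope.

(* Combinatorial data extracted from a collection Gamma of transverse curves:
   - the n connected components (faces) of Sigma \ Gamma, indexed by 'I_n;
     a 2-chain in C = C_2(Sigma;Z) is a row vector c : 'rV[int]_n;
   - the m edges (oriented arcs between consecutive crossings) of the graph
     Gamma, indexed by 'I_m; a 1-chain is a function 'I_m -> int;
   - euler f : rat  = the Euler measure e of the face f;
   - bd f x : int  = coefficient of the edge x in the boundary of the face f
     (so the boundary of c is  x |-> \sum_f c_f * bd f x);
   - gam l x : int = coefficient of the edge x in the 1-chain gamma_l. *)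

Definition euler_of (n : nat) (euler : 'I_n -> rat) (c : 'rV[int]_n) : rat :=
  \sum_(f < n) (c ord0 f)%:~R * euler f.

Definition boundary_of (n m : nat) (bd : 'I_n -> 'I_m -> int)
  (c : 'rV[int]_n) (x : 'I_m) : int :=
  \sum_(f < n) c ord0 f * bd f x.

Definition Hgrp (n m k : nat) (euler : 'I_n -> rat) (bd : 'I_n -> 'I_m -> int)
  (gam : 'I_k -> 'I_m -> int) : set 'rV[int]_n :=
  [set c | euler_of euler c = 0 /\
           exists a : 'I_k -> int,
             forall x : 'I_m, boundary_of bd c x = \sum_(l < k) a l * gam l x].

Definition HR (R : realType) (n : nat) (H : set 'rV[int]_n) : set 'rV[R]_n :=
  [set v | exists (p : nat) (r : 'I_p -> R) (b : 'I_p -> 'rV[int]_n),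
             (forall j, H (b j)) /\
             v = \sum_(j < p) r j *: map_mx (fun z : int => z%:~R) (b j)].

Definition C2plus (R : realType) (n : nat) : set 'rV[R]_n :=
  [set v | forall f : 'I_n, 0 <= v ord0 f].

Definition admissible (n : nat) (H : set 'rV[int]_n) : Prop :=
  forall b, H b -> b != 0 ->
    (exists f : 'I_n, 0 < b ord0 f) /\ (exists f : 'I_n, b ord0 f < 0).

From HB Require Import structures.
From mathcomp Require Import all_boot all_order all_algebra.
From mathcomp Require Import all_classical all_reals all_analysis.
From mathcomp Require Import ring lra.
Import Order.TTheory GRing.Theory Num.Theory.
Import numFieldNormedType.Exports.
Local Open Scope ring_scope.
Local Open Scope classical_set_scope.

(* Let B be an integer matrix with rows in H whose real row space is H_R (a family of
   elements of H of maximal real rank). The set is then the affine space u + H_R cut by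
   the closed cone C_2^+, hence closed, and it remains to bound it.
   First, H_R meets the cone only in 0: from a nonzero nonnegative vector s B of H_R,
   pick rational coefficients giving a vector with the same zero set that is still
   positive where s B is (vanishing there is a system of rational linear equations and
   positivity is an open condition), clear denominators, and get a nonzero nonnegative
   element of H, contradicting admissibility. Hence the negative mass
   N(h) = sum_i (|h_i| - h_i) has a positive minimum delta on the unit sphere of H_R, so
   N(h) >= delta |h| on H_R, while u + h >= 0 forces N(h) <= 2 sum_i |u_i|. *)

Notation intmx B := (map_mx (fun z : int => z%:~R) B).

Section IntegralCombinations.
Variables (n m k : nat) (euler : 'I_n -> rat) (bd : 'I_n -> 'I_m -> int)
  (gam : 'I_k -> 'I_m -> int).

Lemma euler_of_mulmx p (y : 'rV[int]_p) (B : 'M[int]_(p, n)) :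
  euler_of euler (y *m B) = \sum_j (y ord0 j)%:~R * euler_of euler (row j B).
Proof.
rewrite /euler_of; under [RHS]eq_bigr do rewrite mulr_sumr.
rewrite [RHS]exchange_big; apply: eq_bigr => f _ /=.
rewrite !mxE rmorph_sum mulr_suml; apply: eq_bigr => j _.
by rewrite !mxE rmorphM mulrA.
Qed.

Lemma boundary_of_mulmx p (y : 'rV[int]_p) (B : 'M[int]_(p, n)) x :
  boundary_of bd (y *m B) x = \sum_j y ord0 j * boundary_of bd (row j B) x.
Proof.
rewrite /boundary_of; under [RHS]eq_bigr do rewrite mulr_sumr.
rewrite [RHS]exchange_big; apply: eq_bigr => f _ /=.
rewrite !mxE mulr_suml; apply: eq_bigr => j _.
by rewrite !mxE mulrA.
Qed.

Lemma Hgrp_mulmx p (y : 'rV[int]_p) (B : 'M[int]_(p, n)) :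
  (forall j, Hgrp euler bd gam (row j B)) -> Hgrp euler bd gam (y *m B).
Proof.
move=> HB; have /fin_all_exists [a Ha] : forall j, exists a : 'I_k -> int,
    forall x, boundary_of bd (row j B) x = \sum_l a l * gam l x.
  by move=> j; case: (HB j).
split.
  by rewrite euler_of_mulmx big1 // => j _; case: (HB j) => -> _; rewrite mulr0.
exists (fun l => \sum_j y ord0 j * a j l) => x.
rewrite boundary_of_mulmx; under eq_bigr do rewrite Ha mulr_sumr.
rewrite exchange_big; apply: eq_bigr => l _ /=.
by rewrite mulr_suml; apply: eq_bigr => j _; rewrite mulrA.
Qed.

End IntegralCombinations.

Lemma HR_rowspace (R : realType) {n} (H : set 'rV[int]_n) :
  exists p (B : 'M[int]_(p, n)), (forall j, H (row j B)) /\
    @HR R n H = [set v | (v <= intmx B)%MS].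
Proof.
pose P r := `[< exists p (B : 'M[int]_(p, n)),
   (forall j, H (row j B)) /\ \rank (intmx B : 'M[R]_(p, n)) = r >].
have exP : exists r, P r.
  by exists 0%N; apply/asboolP; exists 0%N, 0; split; [case | rewrite map_mx0 mxrank0].
have ubP r : P r -> (r <= n)%N by move=> /asboolP [p [B [_ <-]]]; apply: rank_leq_col.
case: (ex_maxnP exP ubP) => r /asboolP [p [B [HB rB]]] maxr.
have HB_max b : H b -> ((intmx b : 'rV[R]_n) <= intmx B)%MS.
  move=> Hb; pose B' := col_mx B b.
  have HB' i : H (row i B').
    by case: (split_ordP i) => i' ->; rewrite ?rowKu ?rowKd ?row_id.
  have : (\rank (intmx B' : 'M[R]_(_, n)) <= r)%N.
    by apply/maxr/asboolP; exists (p + 1)%N, B'.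
  have sBB' : ((intmx B : 'M[R]_(p, n)) <= intmx B')%MS.
    by rewrite map_col_mx -addsmxE addsmxSl.
  have [rBB' eqB'B] := mxrank_leqif_sup sBB'; rewrite -rB => rB'B.
  have : ((intmx B' : 'M[R]_(p + 1, n)) <= intmx B)%MS by rewrite -eqB'B eqn_leq rBB'.
  by rewrite map_col_mx col_mx_sub => /andP[].
exists p, B; split => //; apply/seteqP; split => v.
  case=> q [c [b [Hb ->]]]; apply: summx_sub => j _.
  exact/scalemx_sub/HB_max.
move/submxP => [D ->]; exists p, (fun j => D ord0 j), (fun j => row j B).
split => //; rewrite mulmx_sum_row; apply: eq_bigr => j _.
by rewrite map_row.
Qed.

Lemma continuous_sum (T : topologicalType) (K : numFieldType) (I : finType)
    (F : I -> T -> K) :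
  (forall i, continuous (F i)) -> continuous (fun x => \sum_i F i x).
Proof.
move=> cF; rewrite -fct_sumE; apply: (big_ind (fun f : T -> K => continuous f)).
- exact: cst_continuous.
- by move=> f g cf cg x; exact: (@continuousD K K^o T f g x (cf x) (cg x)).
- by move=> i _; apply: cF.
Qed.

Lemma continuous_mulmx_coord {R : realType} {n q} (M : 'M[R]_(n, q)) j :
  continuous (fun x : 'rV[R]_n => (x *m M) ord0 j).
Proof.
under [fun x => _]funext do rewrite mxE.
apply: continuous_sum => i x.
by apply: continuousM; [exact: coord_continuous | exact: cst_continuous].
Qed.

Lemma closed_mulmx_eq (R : realType) n q (M : 'M[R]_(n, q)) (c : 'rV[R]_q) :
  closed [set x : 'rV[R]_n | x *m M = c].
Proof.
have -> : [set x : 'rV[R]_n | x *m M = c] =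
    \bigcap_j ((fun x => (x *m M) ord0 j) @^-1` [set c ord0 j]).
  apply/seteqP; split => [x /= <- //|x /= xMc].
  by apply/rowP => j; apply: xMc.
apply: closed_bigI => j _; apply: preimage_closed; last exact: closed_eq.
by move=> x _; apply: continuous_mulmx_coord.
Qed.

Lemma closed_rowspace (R : realType) p n (A : 'M[R]_(p, n)) :
  closed [set h : 'rV[R]_n | (h <= A)%MS].
Proof.
have -> : [set h : 'rV[R]_n | (h <= A)%MS] = [set h | h *m cokermx A = 0].
  by apply/seteqP; split => h /=; rewrite submxE => /eqP.
exact: closed_mulmx_eq.
Qed.

Lemma closed_rowspace_coset (R : realType) p n (A : 'M[R]_(p, n)) (u : 'rV[R]_n) :
  closed [set x : 'rV[R]_n | (x - u <= A)%MS].
Proof.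
have -> : [set x : 'rV[R]_n | (x - u <= A)%MS] =
    [set x | x *m cokermx A = u *m cokermx A].
  by apply/seteqP; split => x /=; rewrite submxE mulmxBl subr_eq0 => /eqP.
exact: closed_mulmx_eq.
Qed.

Lemma closed_C2plus (R : realType) n : closed (@C2plus R n).
Proof.
have -> : @C2plus R n = \bigcap_i ((fun x : 'rV[R]_n => x ord0 i) @^-1` [set y | 0 <= y]).
  by apply/seteqP; split => [x xge0 i _ | x xge0 i]; [exact: xge0 | exact: xge0 i I].
apply: closed_bigI => i _; apply: preimage_closed; last exact: closed_ge.
by move=> x _; apply: coord_continuous.
Qed.

Lemma nbhs_rV_ratr {R : realType} {p} {t : 'rV[R]_p} {P : set 'rV[R]_p} :
  nbhs t P -> exists tQ : 'rV[rat]_p, P (map_mx ratr tQ).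
Proof.
move=> /nbhs_ballP [e /= e0 tP].
have /fin_all_exists [q qP] : forall j : 'I_p, exists q : rat, `|t ord0 j - ratr q| < e.
  move=> j; have [q] := @rat_in_itvoo R (t ord0 j - e) (t ord0 j + e) ltac:(lra).
  by rewrite in_itv /= => qj; exists q; rewrite distrC ltr_distl.
exists (\row_j q j); apply: tP; split => // i j.
by rewrite (ord1 i) !mxE; apply: qP.
Qed.

Lemma kermx_map_factor (F L : fieldType) (f : {rmorphism F -> L}) p q
    (N : 'M[F]_(p, q)) (s : 'rV[L]_p) :
  s *m map_mx f N = 0 -> exists t, s = t *m map_mx f (kermx N).
Proof. by move/sub_kermxP; rewrite -map_kermx => /submxP [t ->]; exists t. Qed.

Lemma ratr_rV_pos {R : realType} {p n} (G : 'M[rat]_(p, n)) (t : 'rV[R]_p) :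
  exists tQ : 'rV[rat]_p,
    forall i, 0 < (t *m map_mx ratr G) ord0 i -> 0 < (tQ *m G) ord0 i.
Proof.
pose M := map_mx ratr G : 'M[R]_(p, n).
have near_pos i : nbhs t [set t' | 0 < (t *m M) ord0 i -> 0 < (t' *m M) ord0 i].
  have [ti|_] := ltrP 0 ((t *m M) ord0 i); last exact: (filterE (nbhs_filter t)).
  have ti_nbhs : nbhs ((t *m M) ord0 i) [set y : R | 0 < y].
    by apply: open_nbhs_nbhs; split; [exact: open_gt | exact: ti].
  move: (continuous_mulmx_coord M i t _ ti_nbhs); rewrite nbhs_filterE => near_f.
  exact: (@filterS _ _ (nbhs_filter t) _ _ (fun t' pos _ => pos) near_f).
have [tQ tQP] := nbhs_rV_ratr (filter_forall (nbhs_filter t) near_pos).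
by exists tQ => i /tQP; rewrite -map_mxM mxE ltr0q.
Qed.

Lemma rowspace_nonneg_ratr {R : realType} {p n} {B : 'M[rat]_(p, n)} {s : 'rV[R]_p} :
  (forall i, 0 <= (s *m map_mx ratr B) ord0 i) -> s *m map_mx ratr B != 0 ->
  exists y : 'rV[rat]_p, (forall i, 0 <= (y *m B) ord0 i) /\ y *m B != 0.
Proof.
set w := s *m map_mx ratr B => w_ge0 w_neq0.
have /existsP [i0 wi0] : [exists i, 0 < w ord0 i].
  apply: contraNT w_neq0 => /existsPn w_le0; apply/eqP/rowP => i.
  by rewrite [RHS]mxE; apply/le_anti; rewrite w_ge0 andbT leNgt w_le0.
(* [y *m B *m D F = 0] says exactly that [y *m B] vanishes wherever [w] does. *)
pose D (F : fieldType) : 'M[F]_n := diag_mx (\row_i (w ord0 i == 0)%:R).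
have mulDE (F : fieldType) (x : 'rV[F]_n) i :
    (x *m D F) ord0 i = if w ord0 i == 0 then x ord0 i else 0.
  by rewrite mul_mx_diag !mxE; case: eqP; rewrite ?mulr1 ?mulr0.
have map_D : map_mx ratr (D rat) = D R.
  by rewrite map_diag_mx; congr diag_mx; apply/rowP => i; rewrite !mxE rmorph_nat.
pose K := kermx (B *m D rat).
have [t sK] : exists t, s = t *m map_mx ratr K.
  apply: kermx_map_factor; rewrite map_mxM map_D mulmxA -/w.
  by apply/rowP => i; rewrite mulDE [RHS]mxE; case: eqP.
have wE : w = t *m map_mx ratr (K *m B) by rewrite /w sK -mulmxA -map_mxM.
have [tQ tQ_pos] := ratr_rV_pos (K *m B) t.
have y_pos i : 0 < w ord0 i -> 0 < (tQ *m K *m B) ord0 i.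
  by rewrite wE -mulmxA; apply: tQ_pos.
have y_zero i : w ord0 i = 0 -> (tQ *m K *m B) ord0 i = 0.
  move=> wi; have KBD : K *m (B *m D rat) = 0 := mulmx_ker _.
  have : tQ *m K *m B *m D rat = 0 by rewrite -(mulmxA (tQ *m K)) -(mulmxA tQ) KBD mulmx0.
  by move/rowP/(_ i); rewrite mulDE wi eqxx => ->; rewrite mxE.
exists (tQ *m K); split => [i|].
  by move: (w_ge0 i); rewrite le_eqVlt => /predU1P[/esym/y_zero -> | /y_pos/ltW].
by apply: contraTneq (y_pos _ wi0) => ->; rewrite mxE ltxx.
Qed.

Lemma rV_rat_scale_int {p} (y : 'rV[rat]_p) :
  exists2 d : int, 0 < d & exists yZ : 'rV[int]_p, intmx yZ = d%:~R *: y.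
Proof.
exists (\prod_j denq (y ord0 j)); first by apply: prodr_gt0 => j _; exact: denq_gt0.
exists (\row_j ((\prod_(l | l != j) denq (y ord0 l)) * numq (y ord0 j))).
apply/rowP => j; rewrite !mxE intrM numqE [in RHS](bigD1 j) //= intrM; ring.
Qed.

Lemma admissible_rowspace_nonneg {R : realType} {n p} {H : set 'rV[int]_n}
    {B : 'M[int]_(p, n)} :
  admissible H -> (forall y, H (y *m B)) ->
  forall s : 'rV[R]_p, (forall i, 0 <= (s *m intmx B) ord0 i) -> s *m intmx B = 0.
Proof.
move=> adm HB s s_ge0; apply/eqP; apply: contraT => s_neq0.
have BQ : (intmx B : 'M[R]_(p, n)) = map_mx ratr (intmx B : 'M[rat]_(p, n)).
  by apply/matrixP => i j; rewrite !mxE ratr_int.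
rewrite BQ in s_ge0 s_neq0.
have [y [y_ge0 y_neq0]] := rowspace_nonneg_ratr s_ge0 s_neq0.
have [d d_gt0 [yZ yZE]] := rV_rat_scale_int y.
have zQ : intmx (yZ *m B) = d%:~R *: (y *m intmx B) :> 'rV[rat]_n.
  by rewrite map_mxM yZE -scalemxAl.
have zE i : ((yZ *m B) ord0 i)%:~R = d%:~R * (y *m intmx B) ord0 i :> rat.
  by have /rowP/(_ i) := zQ; rewrite !mxE.
have z_neq0 : yZ *m B != 0.
  apply: contraNneq y_neq0 => z0; apply/eqP/rowP => i; rewrite [RHS]mxE.
  have := zE i; rewrite z0 [X in X%:~R]mxE mulr0z => /esym/eqP.
  by rewrite mulf_eq0 intr_eq0 gt_eqF //= => /eqP.
have [_ [i zi]] := adm _ (HB yZ) z_neq0.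
have d_gt0' : (0 : rat) < d%:~R by rewrite ltr0z.
have := y_ge0 i; rewrite -(pmulr_rge0 _ d_gt0') -zE ler0z.
by rewrite leNgt zi.
Qed.

Section NegativeMass.
Context {R : realDomainType} {n : nat}.
Implicit Types (u h : 'rV[R]_n).

Definition negmass h : R := \sum_i (`|h ord0 i| - h ord0 i).

Lemma negmass_ge0 h : 0 <= negmass h.
Proof. by apply: sumr_ge0 => i _; rewrite subr_ge0 ler_norm. Qed.

Lemma negmass_eq0 h : negmass h = 0 -> forall i, 0 <= h ord0 i.
Proof.
move=> /eqP; rewrite psumr_eq0 => [/allP h0 i|i _]; last by rewrite subr_ge0 ler_norm.
by have := h0 i (mem_index_enum i); rewrite subr_eq0 => /eqP <-.
Qed.

Lemma negmassZ a h : 0 <= a -> negmass (a *: h) = a * negmass h.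
Proof.
move=> a_ge0; rewrite /negmass mulr_sumr; apply: eq_bigr => i _.
by rewrite !mxE normrM (ger0_norm a_ge0) mulrBr.
Qed.

Lemma negmass_le u h :
  (forall i, 0 <= u ord0 i + h ord0 i) -> negmass h <= 2 * \sum_i `|u ord0 i|.
Proof.
move=> uh_ge0; rewrite /negmass mulr_sumr; apply: ler_sum => i _.
have := uh_ge0 i; have := ler_norm (u ord0 i); have := normr_ge0 (u ord0 i).
by case: (lerP 0 (h ord0 i)) => hi;
  [rewrite (ger0_norm hi) | rewrite (ltr0_norm hi)]; lra.
Qed.

End NegativeMass.

Lemma continuous_negmass (R : realType) n : continuous (@negmass R n).
Proof.
apply: continuous_sum => i x.
apply: (@continuousB _ _ _ (fun h : 'rV[R]_n => `|h ord0 i|)).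
  by apply: continuous_comp; [exact: coord_continuous | exact: norm_continuous].
exact: coord_continuous.
Qed.

Lemma rowspace_nonneg_section_bounded {R : realType} {p n} {A : 'M[R]_(p, n)}
    (u : 'rV[R]_n) :
  (forall h : 'rV[R]_n, (h <= A)%MS -> (forall i, 0 <= h ord0 i) -> h = 0) ->
  exists M, forall h : 'rV[R]_n,
    (h <= A)%MS -> (forall i, 0 <= u ord0 i + h ord0 i) -> `|h| <= M.
Proof.
move=> A_nonneg0.
pose S := [set h : 'rV[R]_n | (h <= A)%MS] `&` [set h | `|h| = 1].
have normalize_S h : (h <= A)%MS -> h != 0 -> S (`|h|^-1 *: h).
  move=> hA h_neq0; split; first exact: scalemx_sub.
  by rewrite /= normrZ normfV normr_id mulVf // normr_eq0.
have [S0|S0] := pselect (S !=set0); last first.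
  exists 0 => h hA _; have [->|/(normalize_S h hA) Sh] := eqVneq h 0.
    by rewrite normr0.
  by exfalso; apply: S0; exists (`|h|^-1 *: h).
have S_compact : compact S.
  apply: bounded_closed_compact; last first.
    apply: closedI; first exact: closed_rowspace.
    apply: (@preimage_closed _ _ (@Num.norm _ 'rV[R]_n) [set 1]); last exact: closed_eq.
    by move=> h _; exact: norm_continuous.
  by exists 1; split => [|M M1 h [_ /= ->]]; [exact: num_real | exact: ltW].
have [c /set_mem [cA c1] c_min] :=
  EVT_min_rV S0 S_compact (continuous_subspaceT (@continuous_negmass R n)).
have mass_gt0 : 0 < negmass c.
  rewrite lt_def negmass_ge0 andbT; apply/eqP => /negmass_eq0 /(A_nonneg0 c cA) c0.
  by move/eqP: c0; rewrite -normr_eq0 c1 oner_eq0.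
exists (2 * (\sum_i `|u ord0 i|) / negmass c) => h hA uh_ge0.
have [->|h_neq0] := eqVneq h 0.
  by rewrite normr0 divr_ge0 ?negmass_ge0 ?mulr_ge0 // sumr_ge0.
have := c_min _ (mem_set (normalize_S h hA h_neq0)).
rewrite negmassZ ?invr_ge0 ?normr_ge0 // ler_pdivlMl ?normr_gt0 // => mass_le.
by rewrite ler_pdivlMr // (le_trans mass_le) // negmass_le.
Qed.

Theorem proposition3p4 (R : realType) (n m k : nat)
  (euler : 'I_n -> rat) (bd : 'I_n -> 'I_m -> int) (gam : 'I_k -> 'I_m -> int)
  (u : 'rV[R]_n) :
  admissible (Hgrp euler bd gam) ->
  @C2plus R n u ->
  compact ([set u + h | h in @HR R n (Hgrp euler bd gam)] `&` @C2plus R n).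
Proof.
move=> adm _.
have [p [B [HB HRE]]] := HR_rowspace R (Hgrp euler bd gam).
have rowspace_nonneg0 (h : 'rV[R]_n) :
    (h <= intmx B)%MS -> (forall i, 0 <= h ord0 i) -> h = 0.
  move=> /submxP [s ->]; apply: admissible_rowspace_nonneg adm _ s.
  by move=> y; apply: Hgrp_mulmx.
have [M M_bound] := rowspace_nonneg_section_bounded u rowspace_nonneg0.
have -> : [set u + h | h in @HR R n (Hgrp euler bd gam)] `&` @C2plus R n =
    [set x | (x - u <= intmx B)%MS] `&` @C2plus R n.
  rewrite HRE; apply/seteqP; split => x [xu x_ge0]; split => //=.
    by case: xu => h hB <-; rewrite (addrC u) addrK.
  by exists (x - u) => //; rewrite addrC subrK.
apply: bounded_closed_compact.
  exists (`|u| + M); split => [|N N_gt x [xu x_ge0]]; first exact: num_real.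
  apply/ltW/(le_lt_trans _ N_gt); have -> : x = u + (x - u) by rewrite addrC subrK.
  rewrite (le_trans (ler_normD _ _)) // lerD2l M_bound // => i.
  by rewrite !mxE (addrC (u ord0 i)) subrK; apply: x_ge0.
apply: closedI; [exact: closed_rowspace_coset | exact: closed_C2plus].
Qed.
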